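(* For a map $F= \left( \begin{bmatrix} f \\ g \end{bmatrix}, \begin{bmatrix} \alpha & \beta \\ \beta^\dagger & \delta \end{bmatrix}, \begin{bmatrix} s \\ t \end{bmatrix} \right): A \to B \otimes C$ in $\mathfrak{G}\left[ (\mathbb{X}, \dagger) \right]_X$, conditionals of $F$ are in bijective correspondence with conditional generators of $\begin{bmatrix} \alpha & \beta \\ \beta^\dagger & \delta \end{bmatrix}$. Explicitly: (i) If $G = \left( \begin{bmatrix} m & k \end{bmatrix}, \eta, u \right)$ is a conditional of $F$ then $m$ is a conditional generator of $\begin{bmatrix} \alpha & \beta \\ \beta^\dagger & \delta \end{bmatrix}$; (ii) If $m$ is a conditional generator of $\begin{bmatrix} \alpha & \beta \\ \beta^\dagger & \delta \end{bmatrix}$, then $G_m = \left( \begin{bmatrix} m & g - m \circ f \end{bmatrix}, \delta - m \circ \beta, t - m\circ s \right)$ is a conditional of $F$; and these constructions are inverses of each other.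
   Context: Let $(\mathbb{X}, \dagger)$ be a dagger additive category (a dagger category enriched in abelian groups with additive dagger and finite biproducts satisfying $\pi_j^\dagger = \iota_j$; maps between biproducts are written as matrices and the dagger acts as conjugate transpose) and fix an object $X$. A map $p$ is $\dagger$-positive if $p = \phi^\dagger \circ \phi$ for some $\phi$. The Gauss construction $\mathfrak{G}\left[ (\mathbb{X}, \dagger) \right]_X$ is the Markov category with the objects of $\mathbb{X}$, maps $A \to B$ the triples $(f,p,x)$ with $f: A \to B$, $p: B \to B$ $\dagger$-positive, $x: X \to B$; identities $\mathsf{Id}_A = (\mathsf{id}_A,0,0)$; composition $(g,q,y) \circ (f,p,x) = (g \circ f, q + g \circ p \circ g^\dagger, y + g \circ x)$; $A \otimes B = A \oplus B$, $(f,p,x) \otimes (g,q,y) = \left(f \oplus g, p \oplus q, \begin{bmatrix} x \\ y \end{bmatrix}\right)$; copy $\mathsf{copy}_A = \left(\begin{bmatrix} \mathsf{id}_A \\ \mathsf{id}_A \end{bmatrix}, 0, 0\right)$, delete $\mathsf{del}_A = (0,0,0): A \to \mathsf{0}$. In $F$, $f: A \to B$, $g: A \to C$, $\alpha: B \to B$, $\beta: C \to B$, $\delta: C \to C$, $s: X \to B$, $t: X \to C$; in $G: B \otimes A \to C$, $m: B \to C$, $k: A \to C$, $\eta: C \to C$, $u: X \to C$. A conditional generator for a $\dagger$-positive map $\begin{bmatrix} \alpha & \beta \\ \beta^\dagger & \delta \end{bmatrix}: B \oplus C \to B \oplus C$ is a map $m: B \to C$ such that (i) $m \circ \alpha = \beta^\dagger$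 and (ii) $\delta - m \circ \beta$ is $\dagger$-positive. A map $G: B \otimes A \to C$ is a conditional of $F: A \to B \otimes C$ if $(\mathsf{Id}_B \otimes G) \circ (\mathsf{copy}_B \otimes \mathsf{Id}_A) \circ (\mathsf{Id}_B \otimes \mathsf{del}_C \otimes \mathsf{Id}_A) \circ (F \otimes \mathsf{Id}_A) \circ \mathsf{copy}_A = F$. *)

From HB Require Import structures.
From mathcomp Require Import all_boot all_algebra.
Import GRing.Theory.
Local Open Scope ring_scope.

Record dagAddCat := DagAddCat {
  Ob : Type;
  Hom : Ob -> Ob -> zmodType;
  comp : forall A B C : Ob, Hom B C -> Hom A B -> Hom A C;
  idm : forall A : Ob, Hom A A;
  dag : forall A B : Ob, Hom A B -> Hom B A;
  zob : Ob;
  bp : Ob -> Ob -> Ob;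
  pi1 : forall A B : Ob, Hom (bp A B) A;
  pi2 : forall A B : Ob, Hom (bp A B) B;
  in1 : forall A B : Ob, Hom A (bp A B);
  in2 : forall A B : Ob, Hom B (bp A B);
  compA : forall (A B C D : Ob) (h : Hom C D) (g : Hom B C) (f : Hom A B),
    comp A C D h (comp A B C g f) = comp A B D (comp B C D h g) f;
  comp1m : forall (A B : Ob) (f : Hom A B), comp A B B (idm B) f = f;
  compm1 : forall (A B : Ob) (f : Hom A B), comp A A B f (idm A) = f;
  compDl : forall (A B C : Ob) (g1 g2 : Hom B C) (f : Hom A B),
    comp A B C (g1 + g2) f = comp A B C g1 f + comp A B C g2 f;
  compDr : forall (A B C : Ob) (g : Hom B C) (f1 f2 : Hom A B),
    comp A B C g (f1 + f2) = comp A B C g f1 + comp A B C g f2;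
  dagK : forall (A B : Ob) (f : Hom A B), dag B A (dag A B f) = f;
  dag_comp : forall (A B C : Ob) (g : Hom B C) (f : Hom A B),
    dag A C (comp A B C g f) = comp C B A (dag A B f) (dag B C g);
  dag_id : forall A : Ob, dag A A (idm A) = idm A;
  dagD : forall (A B : Ob) (f g : Hom A B), dag A B (f + g) = dag A B f + dag A B g;
  zob_id : idm zob = 0;
  bp_11 : forall A B : Ob, comp A (bp A B) A (pi1 A B) (in1 A B) = idm A;
  bp_22 : forall A B : Ob, comp B (bp A B) B (pi2 A B) (in2 A B) = idm B;
  bp_12 : forall A B : Ob, comp B (bp A B) A (pi1 A B) (in2 A B) = 0;
  bp_21 : forall A B : Ob, comp A (bp A B) B (pi2 A B) (in1 A B) = 0;
  bp_sum : forall A B : Ob,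
    comp (bp A B) A (bp A B) (in1 A B) (pi1 A B)
    + comp (bp A B) B (bp A B) (in2 A B) (pi2 A B) = idm (bp A B);
  dag_pi1 : forall A B : Ob, dag (bp A B) A (pi1 A B) = in1 A B;
  dag_pi2 : forall A B : Ob, dag (bp A B) B (pi2 A B) = in2 A B
}.

Set Implicit Arguments. Unset Strict Implicit. Unset Printing Implicit Defensive.

Arguments Hom {d} A B.
Arguments comp {d A B C} g f.
Arguments idm {d} A.
Arguments dag {d A B} f.
Arguments zob {d}.
Arguments bp {d} A B.
Arguments pi1 {d} A B.
Arguments pi2 {d} A B.
Arguments in1 {d} A B.
Arguments in2 {d} A B.

Notation "g \oc f" := (comp g f) (at level 40, left associativity).

Definition dpositive (d : dagAddCat) (B : Ob d) (p : Hom B B) : Prop :=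
  exists (Y : Ob d) (phi : Hom B Y), p = dag phi \oc phi.

Definition col2 (d : dagAddCat) (Z B C : Ob d) (x : Hom Z B) (y : Hom Z C)
  : Hom Z (bp B C) := in1 B C \oc x + in2 B C \oc y.
Definition row2 (d : dagAddCat) (B A C : Ob d) (m : Hom B C) (k : Hom A C)
  : Hom (bp B A) C := m \oc pi1 B A + k \oc pi2 B A.
(* [[a, b], [c, d']] : B (+) C -> B' (+) C' *)
Definition mat2 (d : dagAddCat) (B C B' C' : Ob d)
  (a : Hom B B') (b : Hom C B') (c : Hom B C') (e : Hom C C')
  : Hom (bp B C) (bp B' C') :=
  in1 B' C' \oc a \oc pi1 B C + in1 B' C' \oc b \oc pi2 B C
  + in2 B' C' \oc c \oc pi1 B C + in2 B' C' \oc e \oc pi2 B C.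
Definition dsum (d : dagAddCat) (A B A' B' : Ob d) (f : Hom A A') (g : Hom B B')
  : Hom (bp A B) (bp A' B') := mat2 f 0 0 g.

(* The Gauss construction G[(X, dagger)]_X : a map A -> B is a triple
   (f, p, x) with p dagger-positive.  We represent triples by [gmap] and
   impose positivity as a separate predicate [is_gmap]. *)
Record gmap (d : dagAddCat) (X A B : Ob d) := GMap {
  gf : Hom A B; gp : Hom B B; gx : Hom X B }.
Arguments GMap {d X A B} _ _ _.
Arguments gf {d X A B} _.
Arguments gp {d X A B} _.
Arguments gx {d X A B} _.

Definition is_gmap (d : dagAddCat) (X A B : Ob d) (F : gmap X A B) : Prop :=
  dpositive (gp F).

Section Gauss.
Variables (d : dagAddCat) (X : Ob d).

Definition gid (A : Ob d) : gmap X A A := GMap (idm A) 0 0.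
Definition gcomp (A B C : Ob d) (G : gmap X B C) (F : gmap X A B) : gmap X A C :=
  GMap (gf G \oc gf F) (gp G + gf G \oc gp F \oc dag (gf G)) (gx G + gf G \oc gx F).
Definition gtensor (A B A' B' : Ob d) (F : gmap X A A') (G : gmap X B B')
  : gmap X (bp A B) (bp A' B') :=
  GMap (dsum (gf F) (gf G)) (dsum (gp F) (gp G)) (col2 (gx F) (gx G)).
Definition gcopy (A : Ob d) : gmap X A (bp A A) := GMap (col2 (idm A) (idm A)) 0 0.
Definition gdel (A : Ob d) : gmap X A zob := GMap 0 0 0.
Definition gassoc (A B C : Ob d) : gmap X (bp (bp A B) C) (bp A (bp B C)) :=
  GMap (col2 (pi1 A B \oc pi1 (bp A B) C)
             (col2 (pi2 A B \oc pi1 (bp A B) C) (pi2 (bp A B) C))) 0 0.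
Definition grunit (A : Ob d) : gmap X (bp A zob) A := GMap (pi1 A zob) 0 0.

(* G : B (x) A -> C is a conditional of F : A -> B (x) C when
   (Id_B (x) G) o (copy_B (x) Id_A) o (Id_B (x) del_C (x) Id_A) o (F (x) Id_A) o copy_A = F,
   with associator/unitor made explicit. *)
Definition conditional (A B C : Ob d) (G : gmap X (bp B A) C) (F : gmap X A (bp B C))
  : Prop :=
  gcomp (gtensor (gid B) G)
   (gcomp (gassoc B B A)
    (gcomp (gtensor (gcopy B) (gid A))
     (gcomp (gtensor (grunit B) (gid A))
      (gcomp (gtensor (gtensor (gid B) (gdel C)) (gid A))
       (gcomp (gtensor F (gid A)) (gcopy A)))))) = F.

End Gauss.
Arguments gid {d X} A.
Arguments gcopy {d X} A.
Arguments gdel {d X} A.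
Arguments gassoc {d X} A B C.
Arguments grunit {d X} A.

Definition cond_gen (d : dagAddCat) (B C : Ob d)
  (alpha : Hom B B) (beta : Hom C B) (delta : Hom C C) (m : Hom B C) : Prop :=
  m \oc alpha = dag beta /\ dpositive (delta - m \oc beta).

From Pilot Require Import Defs.
From mathcomp Require Import all_boot ssralg.
Import GRing.Theory.
Local Open Scope ring_scope.

(* The structural maps of the Gauss construction are deterministic, of the
   form (h, 0, 0), and composing with them acts on means by h and on
   covariances by conjugation p |-> h p h^dagger.  For G = ([m k], eta, u)
   the left-hand side of the conditional equation is therefore, in block form,
   ([f; m f + k], [[alpha, alpha m^dagger], [m alpha, eta + m alpha m^dagger]],
   [s; u + m s]).  So G is a conditional of F iff k = g - m f, u = t - m s,
   alpha m^dagger = beta, m alpha = beta^dagger and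
   eta = delta - m alpha m^dagger.  Positivity of Sigma makes alpha
   self-adjoint, so the two middle equations are equivalent, and then
   eta = delta - m beta is forced: it is positive exactly when m is a
   conditional generator. *)

Set Implicit Arguments. Unset Strict Implicit. Unset Printing Implicit Defensive.

Section DaggerAdditive.
Variable d : dagAddCat.
Implicit Types A B C D Z : Ob d.

Lemma mulcA A B C D (h : Hom C D) (g : Hom B C) (f : Hom A B) :
  h \oc (g \oc f) = h \oc g \oc f.
Proof. exact: Defs.compA. Qed.

Lemma mul1c A B (f : Hom A B) : idm B \oc f = f. Proof. exact: comp1m. Qed.
Lemma mulc1 A B (f : Hom A B) : f \oc idm A = f. Proof. exact: compm1. Qed.

Lemma mulcDl A B C (g1 g2 : Hom B C) (f : Hom A B) :
  (g1 + g2) \oc f = g1 \oc f + g2 \oc f.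
Proof. exact: compDl. Qed.

Lemma mulcDr A B C (g : Hom B C) (f1 f2 : Hom A B) :
  g \oc (f1 + f2) = g \oc f1 + g \oc f2.
Proof. exact: compDr. Qed.

Lemma mul0c A B C (f : Hom A B) : (0 : Hom B C) \oc f = 0.
Proof. by apply: (@addrI _ (0 \oc f)); rewrite -mulcDl !addr0. Qed.

Lemma mulc0 A B C (f : Hom B C) : f \oc (0 : Hom A B) = 0.
Proof. by apply: (@addrI _ (f \oc 0)); rewrite -mulcDr !addr0. Qed.

Lemma dagcK A B (f : Hom A B) : dag (dag f) = f. Proof. exact: dagK. Qed.

Lemma dagcM A B C (g : Hom B C) (f : Hom A B) : dag (g \oc f) = dag f \oc dag g.
Proof. exact: dag_comp. Qed.

Lemma dagc1 A : dag (idm A) = idm A. Proof. exact: dag_id. Qed.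

Lemma dagcD A B (f g : Hom A B) : dag (f + g) = dag f + dag g.
Proof. exact: dagD. Qed.

Lemma dagc0 A B : dag (0 : Hom A B) = 0.
Proof. by apply: (@addrI _ (dag 0)); rewrite -dagcD !addr0. Qed.

Lemma dag_in1 A B : dag (in1 A B) = pi1 A B.
Proof. by rewrite -dag_pi1 dagcK. Qed.

Lemma dag_in2 A B : dag (in2 A B) = pi2 A B.
Proof. by rewrite -dag_pi2 dagcK. Qed.

Lemma dag_dpositive B (p : Hom B B) : dpositive p -> dag p = p.
Proof. by case=> Y [phi ->]; rewrite dagcM dagcK. Qed.

Lemma pi1_col2 Z B C (x : Hom Z B) (y : Hom Z C) : pi1 B C \oc col2 x y = x.
Proof. by rewrite /col2 mulcDr !mulcA bp_11 bp_12 mul1c mul0c addr0. Qed.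

Lemma pi2_col2 Z B C (x : Hom Z B) (y : Hom Z C) : pi2 B C \oc col2 x y = y.
Proof. by rewrite /col2 mulcDr !mulcA bp_22 bp_21 mul1c mul0c add0r. Qed.

Lemma row2_in1 B A C (m : Hom B C) (k : Hom A C) : row2 m k \oc in1 B A = m.
Proof. by rewrite /row2 mulcDl -!mulcA bp_11 bp_21 mulc1 mulc0 addr0. Qed.

Lemma row2_in2 B A C (m : Hom B C) (k : Hom A C) : row2 m k \oc in2 B A = k.
Proof. by rewrite /row2 mulcDl -!mulcA bp_22 bp_12 mulc1 mulc0 add0r. Qed.

Lemma row2_eta B A C (h : Hom (bp B A) C) :
  row2 (h \oc in1 B A) (h \oc in2 B A) = h.
Proof. by rewrite /row2 -!mulcA -mulcDr bp_sum mulc1. Qed.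

Lemma col2_inj Z B C (x x' : Hom Z B) (y y' : Hom Z C) :
  col2 x y = col2 x' y' -> x = x' /\ y = y'.
Proof. by move=> E; rewrite -(pi1_col2 x y) E pi1_col2 -(pi2_col2 x y) E pi2_col2. Qed.

Lemma row2_inj B A C (m m' : Hom B C) (k k' : Hom A C) :
  row2 m k = row2 m' k' -> m = m' /\ k = k'.
Proof. by move=> E; rewrite -(row2_in1 m k) E row2_in1 -(row2_in2 m k) E row2_in2. Qed.

Lemma dag_mat2 B C B' C' (a : Hom B B') (b : Hom C B') (c : Hom B C') (e : Hom C C') :
  dag (mat2 a b c e) = mat2 (dag a) (dag c) (dag b) (dag e).
Proof.
rewrite /mat2 !dagcD !dagcM !mulcA !dag_pi1 !dag_pi2 !dag_in1 !dag_in2.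
by rewrite -!addrA (addrCA (in2 _ _ \oc _ \oc _)).
Qed.

End DaggerAdditive.

Section BlockForm.
Variable d : dagAddCat.
Implicit Types A B C D Z : Ob d.

(* Locked copies of [col2] and [row2]: otherwise rewriting with [mulcDr] or
   [dagcD] unfolds them to match their underlying sums. *)
Fact bcol_key : unit. Proof. by []. Qed.
Definition bcol Z B C (x : Hom Z B) (y : Hom Z C) := locked_with bcol_key (col2 x y).
Fact brow_key : unit. Proof. by []. Qed.
Definition brow B A C (m : Hom B C) (k : Hom A C) := locked_with brow_key (row2 m k).

Lemma col2_bcol Z B C (x : Hom Z B) (y : Hom Z C) : col2 x y = bcol x y.
Proof. by rewrite /bcol unlock. Qed.

Lemma row2_brow B A C (m : Hom B C) (k : Hom A C) : row2 m k = brow m k.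
Proof. by rewrite /brow unlock. Qed.

Lemma brow_bcol B A C Z (m : Hom B C) (k : Hom A C) (x : Hom Z B) (y : Hom Z A) :
  brow m k \oc bcol x y = m \oc x + k \oc y.
Proof. by rewrite -row2_brow -col2_bcol {1}/col2 mulcDr !mulcA row2_in1 row2_in2. Qed.

Lemma bcol_mulc Z Y B C (x : Hom Z B) (y : Hom Z C) (h : Hom Y Z) :
  bcol x y \oc h = bcol (x \oc h) (y \oc h).
Proof. by rewrite -!col2_bcol /col2 mulcDl -!mulcA. Qed.

Lemma mulc_brow B A C D (m : Hom B C) (k : Hom A C) (h : Hom C D) :
  h \oc brow m k = brow (h \oc m) (h \oc k).
Proof. by rewrite -!row2_brow /row2 mulcDr !mulcA. Qed.

Lemma dag_bcol Z B C (x : Hom Z B) (y : Hom Z C) :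
  dag (bcol x y) = brow (dag x) (dag y).
Proof. by rewrite -col2_bcol -row2_brow /col2 /row2 dagcD !dagcM !dag_in1 !dag_in2. Qed.

Lemma dag_brow B A C (m : Hom B C) (k : Hom A C) :
  dag (brow m k) = bcol (dag m) (dag k).
Proof. by rewrite -col2_bcol -row2_brow /col2 /row2 dagcD !dagcM dag_pi1 dag_pi2. Qed.

Lemma bcolD Z B C (x x' : Hom Z B) (y y' : Hom Z C) :
  bcol x y + bcol x' y' = bcol (x + x') (y + y').
Proof. by rewrite -!col2_bcol /col2 !mulcDr addrACA. Qed.

Lemma browD B A C (m m' : Hom B C) (k k' : Hom A C) :
  brow m k + brow m' k' = brow (m + m') (k + k').
Proof. by rewrite -!row2_brow /row2 !mulcDl addrACA. Qed.

Lemma bcol0 Z B C : bcol (0 : Hom Z B) (0 : Hom Z C) = 0.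
Proof. by rewrite -col2_bcol /col2 !mulc0 addr0. Qed.

Lemma brow0 B A C : brow (0 : Hom B C) (0 : Hom A C) = 0.
Proof. by rewrite -row2_brow /row2 !mul0c addr0. Qed.

Lemma pi1_brow A B : pi1 A B = brow (idm A) 0.
Proof. by rewrite -row2_brow /row2 mul1c mul0c addr0. Qed.

Lemma pi2_brow A B : pi2 A B = brow 0 (idm B).
Proof. by rewrite -row2_brow /row2 mul1c mul0c add0r. Qed.

Lemma in1_bcol A B : in1 A B = bcol (idm A) 0.
Proof. by rewrite -col2_bcol /col2 mulc1 mulc0 addr0. Qed.

Lemma in2_bcol A B : in2 A B = bcol 0 (idm B).
Proof. by rewrite -col2_bcol /col2 mulc1 mulc0 add0r. Qed.

Lemma idm_bcol A B : idm (bp A B) = bcol (pi1 A B) (pi2 A B).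
Proof. by rewrite -col2_bcol /col2 bp_sum. Qed.

Lemma mat2_bcol B C B' C' (a : Hom B B') (b : Hom C B') (c : Hom B C') (e : Hom C C') :
  mat2 a b c e = bcol (brow a b) (brow c e).
Proof. by rewrite -col2_bcol -!row2_brow /mat2 /col2 /row2 !mulcDr !mulcA addrA. Qed.

Lemma mat2_inj B C B' C' (a a' : Hom B B') (b b' : Hom C B') (c c' : Hom B C')
    (e e' : Hom C C') :
  mat2 a b c e = mat2 a' b' c' e' -> [/\ a = a', b = b', c = c' & e = e'].
Proof.
rewrite !mat2_bcol -!col2_bcol -!row2_brow.
by case/col2_inj=> /row2_inj[-> ->] /row2_inj[-> ->].
Qed.

End BlockForm.

Ltac block_simpl :=
  rewrite ?mat2_bcol ?idm_bcol ?col2_bcol ?row2_brow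
    ?pi1_brow ?pi2_brow ?in1_bcol ?in2_bcol;
  repeat progress rewrite ?bcol_mulc ?mulc_brow ?brow_bcol ?dag_bcol ?dag_brow
    ?bcolD ?browD ?bcol0 ?brow0 ?mulcDl ?mulcDr ?mul0c ?mulc0
    ?mul1c ?mulc1 ?dagcM ?dagcD ?dagc0 ?dagcK ?dagc1 ?addr0 ?add0r ?mulcA.

Section Gauss.
Variables (d : dagAddCat) (X : Ob d).
Implicit Types A B C Y : Ob d.

Definition glift A B (h : Hom A B) : gmap X A B := GMap h 0 0.

Lemma gcomp_liftl A B C (h : Hom B C) (F : gmap X A B) :
  gcomp (glift h) F = GMap (h \oc gf F) (h \oc gp F \oc dag h) (h \oc gx F).
Proof. by rewrite /gcomp /= !add0r. Qed.

Lemma gcomp_liftr A B C (G : gmap X B C) (h : Hom A B) :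
  gcomp G (glift h) = GMap (gf G \oc h) (gp G) (gx G).
Proof. by rewrite /gcomp /= !mulc0 mul0c !addr0. Qed.

Lemma gtensor_lift A B A' B' (h : Hom A A') (h' : Hom B B') :
  gtensor (glift h) (glift h') = glift (dsum h h').
Proof. by rewrite /gtensor /glift /= /dsum col2_bcol !mat2_bcol !brow0 !bcol0. Qed.

Lemma gcomp_tensor_copy A B (F : gmap X A B) :
  gcomp (gtensor F (gid A)) (gcopy A)
  = GMap (col2 (gf F) (idm A)) (dsum (gp F) 0) (col2 (gx F) 0).
Proof. by rewrite gcomp_liftr /=; congr GMap; rewrite /dsum; block_simpl. Qed.

Definition rewire B C A : Hom (bp (bp B C) A) (bp B (bp B A)) :=
  col2 (pi1 B C \oc pi1 _ A) (col2 (pi1 B C \oc pi1 _ A) (pi2 _ A)).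

Lemma rewireE B C A :
  rewire B C A = gf (gassoc (X:=X) B B A) \oc gf (gtensor (gcopy (X:=X) B) (gid A))
    \oc gf (gtensor (grunit (X:=X) B) (gid A))
    \oc gf (gtensor (gtensor (gid (X:=X) B) (gdel C)) (gid A)).
Proof. by rewrite /rewire /= /dsum; block_simpl. Qed.

Lemma gcomp_rewire B C A Y (H : gmap X Y (bp (bp B C) A)) :
  gcomp (gassoc B B A) (gcomp (gtensor (gcopy B) (gid A))
    (gcomp (gtensor (grunit B) (gid A))
      (gcomp (gtensor (gtensor (gid B) (gdel C)) (gid A)) H)))
  = gcomp (glift (rewire B C A)) H.
Proof. by rewrite !gtensor_lift !gcomp_liftl rewireE /= !dagcM !mulcA. Qed.

Lemma conditional_composite_block A B C (f : Hom A B) (g : Hom A C)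
    (a : Hom B B) (b : Hom C B) (c : Hom B C) (e : Hom C C) (s : Hom X B) (t : Hom X C)
    (m : Hom B C) (k : Hom A C) (eta : Hom C C) (u : Hom X C) :
  gcomp (gtensor (gid B) (GMap (row2 m k) eta u))
   (gcomp (gassoc B B A)
    (gcomp (gtensor (gcopy B) (gid A))
     (gcomp (gtensor (grunit B) (gid A))
      (gcomp (gtensor (gtensor (gid B) (gdel C)) (gid A))
       (gcomp (gtensor (GMap (col2 f g) (mat2 a b c e) (col2 s t)) (gid A))
         (gcopy A))))))
  = GMap (col2 f (m \oc f + k))
      (mat2 a (a \oc dag m) (m \oc a) (eta + m \oc a \oc dag m))
      (col2 s (u + m \oc s)).
Proof.
rewrite gcomp_tensor_copy gcomp_rewire gcomp_liftl /gcomp /= /rewire /dsum.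
by congr GMap; block_simpl.
Qed.

Lemma conditional_blockP A B C (f : Hom A B) (g : Hom A C) (a : Hom B B)
    (b : Hom C B) (c : Hom B C) (e : Hom C C) (s : Hom X B) (t : Hom X C)
    (m : Hom B C) (k : Hom A C) (eta : Hom C C) (u : Hom X C) :
  conditional (GMap (row2 m k) eta u) (GMap (col2 f g) (mat2 a b c e) (col2 s t)) <->
  [/\ m \oc f + k = g, a \oc dag m = b, m \oc a = c,
      eta + m \oc a \oc dag m = e & u + m \oc s = t].
Proof.
rewrite /conditional conditional_composite_block; split; last by case=> -> -> -> -> ->.
by case=> /col2_inj[_ ->] /mat2_inj[_ -> -> ->] /col2_inj[_ ->].
Qed.

Lemma gmap_row2E A B C (G : gmap X (bp B A) C) :
  G = GMap (row2 (gf G \oc in1 B A) (gf G \oc in2 B A)) (gp G) (gx G).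
Proof. by case: G => h eta u; rewrite row2_eta. Qed.

End Gauss.

Unset Implicit Arguments.

Theorem mainTheorem8 (d : dagAddCat) (X A B C : Ob d)
  (f : Hom A B) (g : Hom A C) (alpha : Hom B B) (beta : Hom C B) (delta : Hom C C)
  (s : Hom X B) (t : Hom X C) :
  let Sigma := mat2 alpha beta (dag beta) delta in
  let F : gmap X A (bp B C) := GMap (col2 f g) Sigma (col2 s t) in
  let Gm (m : Hom B C) : gmap X (bp B A) C :=
    GMap (row2 m (g - m \oc f)) (delta - m \oc beta) (t - m \oc s) in
  dpositive Sigma ->
  (* (i) *)
  (forall G : gmap X (bp B A) C, is_gmap G -> conditional G F ->
     cond_gen alpha beta delta (gf G \oc in1 B A)) /\
  (* (ii) *)
  (forall m : Hom B C, cond_gen alpha beta delta m ->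
     is_gmap (Gm m) /\ conditional (Gm m) F) /\
  (* the constructions are mutually inverse *)
  (forall m : Hom B C, cond_gen alpha beta delta m -> gf (Gm m) \oc in1 B A = m) /\
  (forall G : gmap X (bp B A) C, is_gmap G -> conditional G F ->
     G = Gm (gf G \oc in1 B A)).
Proof.
move=> Sigma F Gm /dag_dpositive.
rewrite /Sigma dag_mat2 dagcK => /mat2_inj[alpha_sa _ _ _].
split; [|split; [|split]].
- move=> G posG; rewrite [G in conditional G]gmap_row2E.
  case/conditional_blockP=> _ betaE mE etaE _; split=> //.
  by rewrite -etaE -betaE mulcA addrK.
- move=> m [mE posD]; split=> //; apply/conditional_blockP.
  have betaE : alpha \oc dag m = beta by rewrite -alpha_sa -dagcM mE dagcK.
  split=> //.
  + by rewrite addrC subrK.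
  + by rewrite -mulcA betaE subrK.
  + by rewrite subrK.
- by move=> m _; rewrite row2_in1.
- move=> G _; rewrite [G in conditional G]gmap_row2E.
  case/conditional_blockP=> fE betaE _ etaE uE.
  rewrite {1}[G]gmap_row2E /Gm -fE -etaE -betaE -uE mulcA.
  by rewrite (addrC (_ \oc f)) !addrK.
Qed.
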